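(* Consider an LSTM network with weight matrices $W_\star\in\mathbb{R}^{n_x\times n_u}$, $U_\star\in\mathbb{R}^{n_x\times n_x}$, biases $b_\star\in\mathbb{R}^{n_x}$ ($\star\in\{f,i,o,c\}$) and input bound $u_{\max}>0$. If \[ -1+\bar{\sigma}_g^f+\alpha\bar{\sigma}_g^o+\tfrac14\bar{\sigma}_c^x\|U_o\|<\tfrac14\bar{\sigma}_g^f\bar{\sigma}_c^x\|U_o\|<1, \] where $\alpha=\tfrac14\|U_f\|\frac{\bar{\sigma}_g^i\bar{\sigma}_c^c}{1-\bar{\sigma}_g^f}+\bar{\sigma}_g^i\|U_c\|+\tfrac14\|U_i\|\bar{\sigma}_c^c$, then \[ \bar{\sigma}_g^f+\bar{\sigma}_g^o\bar{\sigma}_g^i\|U_c\|<1. \]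
   Context: $\sigma_g(t)=1/(1+e^{-t})$, $\sigma_c=\tanh$. $\|\cdot\|$ is the induced 2-norm, $\|\cdot\|_\infty$ the induced $\infty$-norm. For $\star\in\{f,i,o\}$, $\bar{\sigma}_g^\star=\sigma_g(\|[W_\star u_{\max}\ U_\star\ b_\star]\|_\infty)$ (horizontal concatenation); $\bar{\sigma}_c^c=\sigma_c(\|[W_c u_{\max}\ U_c\ b_c]\|_\infty)$; $\bar{\sigma}_c^x=\sigma_c(\bar{\sigma}_g^i\bar{\sigma}_c^c/(1-\bar{\sigma}_g^f))$. *)

From HB Require Import structures.
From mathcomp Require Import all_boot all_order all_algebra.
From mathcomp Require Import all_classical all_reals all_analysis.
Set Implicit Arguments. Unset Strict Implicit. Unset Printing Implicit Defensive.
Import Order.TTheory GRing.Theory Num.Theory.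
Local Open Scope ring_scope.
Local Open Scope classical_set_scope.

Section LSTMDefs.
Variable R : realType.

Definition sigma_g (t : R) : R := 1 / (1 + expR (- t)).
Definition tanhR (t : R) : R := (expR t - expR (- t)) / (expR t + expR (- t)).
Definition sigma_c (t : R) : R := tanhR t.

Definition norm2 (n : nat) (x : 'cV[R]_n) : R := Num.sqrt (\sum_i (x i 0) ^+ 2).

Definition opnorm2 (m n : nat) (A : 'M[R]_(m, n)) : R :=
  sup [set r | exists x : 'cV[R]_n, norm2 x <= 1 /\ r = norm2 (A *m x)].

Definition opnorm_inf (m n : nat) (A : 'M[R]_(m, n)) : R :=
  \big[Num.max/0]_(i < m) \sum_(j < n) `|A i j|.

Definition gate_norm (nx nu : nat) (umax : R) (W : 'M[R]_(nx, nu))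
  (U : 'M[R]_nx) (b : 'cV[R]_nx) : R :=
  opnorm_inf (row_mx (row_mx (umax *: W) U) b).

Definition sbar_g (nx nu : nat) (umax : R) W U b : R :=
  sigma_g (@gate_norm nx nu umax W U b).
Definition sbar_cc (nx nu : nat) (umax : R) W U b : R :=
  sigma_c (@gate_norm nx nu umax W U b).

End LSTMDefs.

(* The first hypothesis has the form [-1 + sf + alpha so + d < sf d] with
   [d = sx ||U_o|| / 4 >= 0].  Since [sf < 1] we have [sf d <= d], so
   [sf + alpha so < 1]; and [alpha >= si ||U_c||] because its other two
   summands are nonnegative. *)
From HB Require Import structures.
From mathcomp Require Import all_boot all_order all_algebra.
From mathcomp Require Import all_classical all_reals all_analysis.
From mathcomp Require Import lra.
Import Order.TTheory GRing.Theory Num.Theory.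
Local Open Scope ring_scope.

Section Nonnegativity.
Context {R : realType}.

Lemma sigma_g_ge0 (t : R) : 0 <= sigma_g t.
Proof. by rewrite /sigma_g divr_ge0 // addr_ge0 // expR_ge0. Qed.

Lemma sigma_g_lt1 (t : R) : sigma_g t < 1.
Proof.
rewrite /sigma_g ltr_pdivrMr ?mul1r; last by rewrite ltr_wpDr ?expR_ge0.
by rewrite ltrDl expR_gt0.
Qed.

Lemma sigma_c_ge0 (t : R) : 0 <= t -> 0 <= sigma_c t.
Proof.
move=> t_ge0; rewrite /sigma_c /tanhR divr_ge0 //.
by rewrite subr_ge0 ler_expR; lra.
Qed.

Lemma opnorm2_ge0 {m n : nat} (A : 'M[R]_(m, n)) : 0 <= opnorm2 A.
Proof.
rewrite /opnorm2; set S := (X in sup X).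
have S_norm0 : S (norm2 (A *m 0)).
  exists 0; split => //.
  by rewrite /norm2 big1 ?sqrtr0 // => i _; rewrite mxE expr0n.
have [supS|/sup_out->//] := pselect (has_sup S).
by apply: le_trans (sup_upper_bound supS S_norm0); apply: sqrtr_ge0.
Qed.

Lemma opnorm_inf_ge0 {m n : nat} (A : 'M[R]_(m, n)) : 0 <= opnorm_inf A.
Proof.
rewrite /opnorm_inf; elim/big_ind: _ => //.
  by move=> x y x_ge0 y_ge0; rewrite le_max x_ge0.
by move=> i _; apply: sumr_ge0.
Qed.

Lemma sbar_cc_ge0 (nx nu : nat) (umax : R) (W : 'M[R]_(nx, nu))
    (U : 'M[R]_nx) (b : 'cV[R]_nx) : 0 <= sbar_cc umax W U b.
Proof. exact/sigma_c_ge0/opnorm_inf_ge0. Qed.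

End Nonnegativity.

Lemma lt1_of_margin (R : realFieldType) (s o a b d : R) :
  s <= 1 -> 0 <= o -> b <= a -> 0 <= d ->
  -1 + s + a * o + d < s * d -> s + o * b < 1.
Proof.
move=> s_le1 o_ge0 b_le_a d_ge0 margin.
have sd_le_d : s * d <= d by rewrite ler_piMl.
have bo_le_ao : b * o <= a * o by rewrite ler_wpM2r.
rewrite mulrC; lra.
Qed.

Theorem corollary1 (R : realType) (nx nu : nat)
  (Wf Wi Wo Wc : 'M[R]_(nx, nu)) (Uf Ui Uo Uc : 'M[R]_nx)
  (bf bi bo bc : 'cV[R]_nx) (umax : R) (humax : 0 < umax) :
  let sf := sbar_g umax Wf Uf bf in
  let si := sbar_g umax Wi Ui bi in
  let so := sbar_g umax Wo Uo bo in
  let scc := sbar_cc umax Wc Uc bc in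
  let sx := sigma_c (si * scc / (1 - sf)) in
  let alpha := 4^-1 * opnorm2 Uf * (si * scc / (1 - sf))
               + si * opnorm2 Uc + 4^-1 * opnorm2 Ui * scc in
  -1 + sf + alpha * so + 4^-1 * sx * opnorm2 Uo < 4^-1 * sf * sx * opnorm2 Uo ->
  4^-1 * sf * sx * opnorm2 Uo < 1 ->
  sf + so * si * opnorm2 Uc < 1.
Proof.
move=> sf si so scc sx alpha margin _.
have sf_lt1 : sf < 1 by apply: sigma_g_lt1.
have si_ge0 : 0 <= si by apply: sigma_g_ge0.
have scc_ge0 : 0 <= scc by apply: sbar_cc_ge0.
have ratio_ge0 : 0 <= si * scc / (1 - sf).
  by apply: divr_ge0; [exact: mulr_ge0 | rewrite subr_ge0 ltW].
have sx_ge0 : 0 <= sx by apply: sigma_c_ge0.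
have quarter_ge0 : 0 <= 4^-1 :> R by rewrite invr_ge0.
have {}margin : -1 + sf + alpha * so + 4^-1 * sx * opnorm2 Uo
                < sf * (4^-1 * sx * opnorm2 Uo).
  by rewrite [sf * _]mulrA [sf * _]mulrA (mulrC sf).
rewrite -mulrA; apply: lt1_of_margin margin.
- exact: ltW.
- exact: sigma_g_ge0.
- have Uf_term := mulr_ge0 (mulr_ge0 quarter_ge0 (opnorm2_ge0 Uf)) ratio_ge0.
  have Ui_term := mulr_ge0 (mulr_ge0 quarter_ge0 (opnorm2_ge0 Ui)) scc_ge0.
  by rewrite /alpha -addrA (ler_wpDl Uf_term) // lerDl.
- exact: mulr_ge0 (mulr_ge0 quarter_ge0 sx_ge0) (opnorm2_ge0 Uo).
Qed.
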